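(* Fix a number $x$ (real or complex) and let $(u_n)_{n\ge0}$ satisfy $(n+\tfrac12)u_{n+1}=2xn\,u_n-(n-\tfrac12)u_{n-1}$ for all $n\ge1$. (a) If $\hat u_n=\dfrac{x u_n-u_{n-1}}{2n+1}$ for $n\ge1$, then $(n+\tfrac32)\hat u_{n+1}=2xn\,\hat u_n-(n-\tfrac32)\hat u_{n-1}$ for all $n\ge2$. (b) The same conclusion holds for $\hat u_n=\dfrac{x u_n-u_{n+1}}{2n-1}$, $n\ge0$. *)

(* The scalar field is an arbitrary numFieldType R,
   which covers both the real case (e.g. R : realType) and the complex
   case (e.g. complex R, algC). *)
From mathcomp Require Import all_boot all_order all_algebra.
Set Implicit Arguments. Unset Strict Implicit. Unset Printing Implicit Defensive.
Import Order.TTheory GRing.Theory Num.Theory.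
Local Open Scope ring_scope.

Definition rec_at (R : numFieldType) (a x : R) (v : nat -> R) (n : nat) : Prop :=
  (n%:R + a) * v n.+1 = 2 * x * n%:R * v n - (n%:R - a) * v n.-1.

Definition uhat_a (R : numFieldType) (x : R) (u : nat -> R) (n : nat) : R :=
  (x * u n - u n.-1) / (2 * n%:R + 1).

Definition uhat_b (R : numFieldType) (x : R) (u : nat -> R) (n : nat) : R :=
  (x * u n - u n.+1) / (2 * n%:R - 1).

From mathcomp Require Import all_boot all_order all_algebra.
From mathcomp Require Import ring.
Import Order.TTheory GRing.Theory Num.Theory.
Set Implicit Arguments. Unset Strict Implicit. Unset Printing Implicit Defensive.
Local Open Scope ring_scope.

(* Write D_a(v, n) for the defect (n + a) v_{n+1} - (2 x n v_n - (n - a) v_{n-1})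
   of the recurrence.  The defect of the transformed sequence at n is an explicit linear
   combination of the defects of u at two consecutive indices:
     (a) D_{3/2}(hat u, n) = x/(2n+1) D_{1/2}(u, n) - 1/(2n-1) D_{1/2}(u, n-1),
     (b) D_{3/2}(hat u, n) = x/(2n-1) D_{1/2}(u, n) - 1/(2n+1) D_{1/2}(u, n+1),
   so it vanishes whenever u satisfies the recurrence.  Both are rational identities whose
   denominators are odd natural numbers, hence nonzero in characteristic 0. *)

Definition rec_defect (R : numFieldType) (a x : R) (v : nat -> R) (n : nat) : R :=
  (n%:R + a) * v n.+1 - (2 * x * n%:R * v n - (n%:R - a) * v n.-1).

Lemma rec_atE (R : numFieldType) (a x : R) (v : nat -> R) (n : nat) :
  rec_at a x v n <-> rec_defect a x v n = 0.
Proof. by rewrite /rec_defect; split=> [->|/eqP]; [exact: subrr | rewrite subr_eq0 => /eqP]. Qed.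

Section Defects.

Variables (R : numFieldType) (x : R) (u : nat -> R).

Lemma rec_defect_uhat_a (n : nat) : (1 < n)%N ->
  rec_defect (3 / 2) x (uhat_a x u) n =
    x / (2 * n%:R + 1) * rec_defect 2^-1 x u n
    - (2 * n%:R - 1)^-1 * rec_defect 2^-1 x u n.-1.
Proof.
case: n => [|[|k]] // _.
rewrite /rec_defect /uhat_a /= -!(natr1 k.+1) -!(natr1 k); field.
by rewrite !natr1 -?natrD -!natrM ?natr1 ?subr_eq0 ?pnatr_eq0 ?pnatr_eq1 !mul2n.
Qed.

Lemma rec_defect_uhat_b (n : nat) : (1 < n)%N ->
  rec_defect (3 / 2) x (uhat_b x u) n =
    x / (2 * n%:R - 1) * rec_defect 2^-1 x u n
    - (2 * n%:R + 1)^-1 * rec_defect 2^-1 x u n.+1.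
Proof.
case: n => [|[|k]] // _.
rewrite /rec_defect /uhat_b /= -!(natr1 k.+2) -!(natr1 k.+1) -!(natr1 k); field.
by rewrite !natr1 -?natrD -!natrM ?natr1 ?subr_eq0 ?pnatr_eq0 ?pnatr_eq1 !mul2n.
Qed.

End Defects.

Theorem mainTheorem3 (R : numFieldType) (x : R) (u : nat -> R) :
  (forall n : nat, (1 <= n)%N -> rec_at (2^-1) x u n) ->
  (forall n : nat, (2 <= n)%N -> rec_at (3 / 2) x (uhat_a x u) n) /\
  (forall n : nat, (2 <= n)%N -> rec_at (3 / 2) x (uhat_b x u) n).
Proof.
move=> rec_u.
have defect0 n : (0 < n)%N -> rec_defect 2^-1 x u n = 0.
  by move=> n_gt0; apply/rec_atE/rec_u.
split=> n n_gt1; apply/rec_atE.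
- by rewrite rec_defect_uhat_a // !defect0 ?ltn_predRL ?(ltnW n_gt1) // !mulr0 subrr.
- by rewrite rec_defect_uhat_b // !defect0 ?(ltnW n_gt1) // !mulr0 subrr.
Qed.
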